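(* Let $(R,pR)$ be a discrete valuation domain with valuation $\mathsf{v}$ and finite residue field, $f\in R[x]$ non-constant and primitive with irreducible divisor set $\mathcal{P}$, and $n:=\mathsf{v}(\operatorname{d}(f))\ge 1$. Let $W\subseteq\mathcal{W}(f)$ be a set of representatives of $\mathcal{W}(f)$ modulo $p^{\lceil n/2\rceil}R$ (i.e. $W$ contains exactly one element of each residue class modulo $p^{\lceil n/2\rceil}R$ that meets $\mathcal{W}(f)$). Then for every $a\in\mathcal{W}(f)$ there exists $w\in W$ with $\mathsf{v}_{\mathcal{P}}(a)=\mathsf{v}_{\mathcal{P}}(w)$. In particular, the matrix in $\mathbb{Q}^{W\times\mathcal{P}}$ whose row indexed by $w$ is $\mathsf{v}_{\mathcal{P}}(w)$ has kernel equal to $\operatorname{fdk}(f)$.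
   Context: $\operatorname{d}(f)=\gcd(f(a)\mid a\in R)$, so $\mathsf{v}(\operatorname{d}(f))=\min_{a\in R}\mathsf{v}(f(a))$. Primitive means the coefficients generate $R$. An irreducible divisor set $\mathcal{P}$ of $f$ is a set of representatives of the associate classes of irreducible divisors of $f$ in $R[x]$. For $a\in R$, $\mathsf{v}_{\mathcal{P}}(a)=(\mathsf{v}(g(a)))_{g\in\mathcal{P}}$. $\mathcal{W}(f)=\{a\in R\mid \mathsf{v}(f(a))=\mathsf{v}(\operatorname{d}(f))\}$, and $\operatorname{fdk}(f)=\{(u_g)_{g\in\mathcal{P}}\in\mathbb{Q}^{\mathcal{P}}\mid \forall a\in\mathcal{W}(f):\sum_{g}u_g\,\mathsf{v}(g(a))=0\}$. *)

From mathcomp Require Import all_boot all_algebra.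
Set Implicit Arguments.
Unset Strict Implicit.
Unset Printing Implicit Defensive.
Import GRing.Theory Num.Theory.
Local Open Scope ring_scope.

Definition rdvd (T : comNzRingType) (x y : T) : Prop := exists c, y = x * c.

Definition rassoc (T : comUnitRingType) (x y : T) : Prop :=
  exists u, u \is a GRing.unit /\ x = u * y.

Definition rirreducible (T : comUnitRingType) (x : T) : Prop :=
  [/\ x != 0, x \isn't a GRing.unit &
      forall a b, x = a * b -> a \is a GRing.unit \/ b \is a GRing.unit].

(* R is a discrete valuation domain with uniformizer p and (normalized)
   valuation v: every nonzero a is u * p^(v a) with u a unit. *)
Definition is_dvr_valuation (R : idomainType) (p : R) (v : R -> nat) : Prop :=
  [/\ p != 0, p \isn't a GRing.unit &
      forall a, a != 0 -> exists u, u \is a GRing.unit /\ a = u * p ^+ v a].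

Definition finite_residue (R : idomainType) (p : R) : Prop :=
  exists s : seq R, forall a, exists2 r, r \in s & rdvd p (a - r).

Definition primitive_poly (R : idomainType) (f : {poly R}) : Prop :=
  exists c : nat -> R, \sum_(i < size f) c i * f`_i = 1.

(* n = v(d(f)) = min_{a in R} v(f(a))  (v(0) = infinity). *)
Definition is_val_fixdiv (R : idomainType) (v : R -> nat) (f : {poly R}) (n : nat) : Prop :=
  (exists a, f.[a] != 0 /\ v f.[a] = n) /\
  (forall a, f.[a] != 0 -> (n <= v f.[a])%N).

Definition in_Wf (R : idomainType) (v : R -> nat) (f : {poly R}) (n : nat) (a : R) : Prop :=
  f.[a] != 0 /\ v f.[a] = n.

Definition irr_divisor_set (R : idomainType) (f : {poly R}) (P : seq {poly R}) : Prop :=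
  [/\ forall g, g \in P -> rirreducible g /\ rdvd g f,
      forall i j : 'I_(size P), rassoc P`_i P`_j -> i = j &
      forall g, rirreducible g -> rdvd g f -> exists2 h, h \in P & rassoc g h].

Definition vP (R : idomainType) (v : R -> nat) (P : seq {poly R}) (a : R)
  : 'I_(size P) -> nat := fun i => v (P`_i).[a].

Definition reps_mod (R : idomainType) (p : R) (m : nat) (Wf W : R -> Prop) : Prop :=
  [/\ forall w, W w -> Wf w,
      forall a, Wf a -> exists w, W w /\ rdvd (p ^+ m) (a - w) &
      forall w1 w2, W w1 -> W w2 -> rdvd (p ^+ m) (w1 - w2) -> w1 = w2].
Arguments vP {R} v P a _.
Arguments is_dvr_valuation {R} p v.
Arguments is_val_fixdiv {R} v f n.
Arguments in_Wf {R} v f n a.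
Arguments reps_mod {R} p m Wf W.

From mathcomp Require Import all_boot all_algebra.
From mathcomp Require Import zify ring.
From Stdlib Require Import FunctionalExtensionality.
Set Implicit Arguments.
Unset Strict Implicit.
Import GRing.Theory Num.Theory.
Local Open Scope ring_scope.

(* If [a = w (mod p^m)] with [n <= 2m], then for every factorization [f = g h]
   the values [g(a)] and [g(w)] are congruent modulo [p^m], so their
   valuations agree as soon as one of them is below [m], and likewise for [h].
   Since [v(g(a)) + v(h(a)) = n = v(g(w)) + v(h(w))] and [n <= 2m], at most one
   of the two factors can reach valuation [m], which forces
   [v(g(a)) = v(g(w))]. *)

Section DiscreteValuation.

Variables (R : idomainType) (p : R) (v : R -> nat).
Hypothesis dvr : is_dvr_valuation p v.

Lemma pmul_nonunit c : p * c \isn't a GRing.unit.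
Proof. by case: dvr => _ pNunit _; rewrite unitrM (negbTE pNunit). Qed.

Lemma unit_neq_pexpM u k j c :
  u \is a GRing.unit -> (k < j)%N -> u * p ^+ k <> p ^+ j * c.
Proof.
move=> u_unit lt_kj E; case: dvr => p_neq0 _ _.
suff Eu : u = p * (p ^+ (j - k).-1 * c).
  by rewrite Eu (negbTE (pmul_nonunit _)) in u_unit.
apply: (mulIf (expf_neq0 k p_neq0)).
rewrite E mulrA -exprS -mulrA [c * _]mulrC mulrA -exprD.
by congr (_ ^+ _ * _); lia.
Qed.

Lemma valuation_ge x k c : x != 0 -> x = p ^+ k * c -> (k <= v x)%N.
Proof.
move=> x_neq0 E; case: dvr => _ _ /(_ x x_neq0) [u [u_unit Ex]].
rewrite leqNgt; apply/negP => lt_vk.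
exact: (unit_neq_pexpM u_unit lt_vk (etrans (esym Ex) E)).
Qed.

Lemma valuation_unitM u x k : u \is a GRing.unit -> x = u * p ^+ k -> v x = k.
Proof.
move=> u_unit E; case: dvr => p_neq0 _ factor.
have u_neq0 : u != 0 by apply: contraTneq u_unit => ->; rewrite unitr0.
have x_neq0 : x != 0 by rewrite E mulf_neq0 ?expf_neq0.
apply/eqP; rewrite eqn_leq (valuation_ge x_neq0 (c := u)) ?andbT; last by rewrite E mulrC.
have [u' [u'_unit Ex]] := factor x x_neq0.
rewrite leqNgt; apply/negP => lt_kv.
by apply: (unit_neq_pexpM u_unit lt_kv (c := u')); rewrite -E {1}Ex mulrC.
Qed.

Lemma valuationM x y : x != 0 -> y != 0 -> v (x * y) = (v x + v y)%N.
Proof.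
case: dvr => _ _ factor x_neq0 y_neq0.
have [u [u_unit Ex]] := factor x x_neq0; have [u' [u'_unit Ey]] := factor y y_neq0.
apply: (valuation_unitM (u := u * u')); first by rewrite unitrM u_unit u'_unit.
by rewrite {1}Ex {1}Ey exprD; ring.
Qed.

Lemma unitrDpM u c : u \is a GRing.unit -> u + p * c \is a GRing.unit.
Proof.
move=> u_unit; case: dvr => _ _ factor.
have u_Npmul d : u <> p * d.
  by move=> Eu; rewrite Eu (negbTE (pmul_nonunit _)) in u_unit.
have [z_eq0|z_neq0] := eqVneq (u + p * c) 0.
  by case: (u_Npmul (- c)); apply/eqP; rewrite mulrN -subr_eq0 opprK z_eq0.
have [u' [u'_unit E]] := factor _ z_neq0.
case: (v (u + p * c)) E => [|s] E; first by rewrite E expr0 mulr1.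
case: (u_Npmul (u' * p ^+ s - c)).
by rewrite -[u](addrK (p * c)) E exprS; ring.
Qed.

Lemma valuation_congr_lt x y m :
  rdvd (p ^+ m) (x - y) -> x != 0 -> (v x < m)%N -> v y = v x.
Proof.
case: dvr => _ _ factor [c E] x_neq0 lt_vm.
have [u [u_unit Ex]] := factor x x_neq0.
have [j Em] : exists j, m = (v x + j.+1)%N by exists (m - v x).-1; lia.
apply: (valuation_unitM (unitrDpM (- (p ^+ j * c)) u_unit)).
have -> : y = x - p ^+ m * c by rewrite -E; ring.
by rewrite {1}Ex Em exprD exprS; ring.
Qed.

Lemma valuation_congr_min x y m : rdvd (p ^+ m) (x - y) ->
  x != 0 -> y != 0 -> minn (v x) m = minn (v y) m.
Proof.
move=> xy_dvd x_neq0 y_neq0.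
have yx_dvd : rdvd (p ^+ m) (y - x).
  by case: xy_dvd => c E; exists (- c); rewrite mulrN -E opprB.
have [lt_xm|ge_xm] := ltnP (v x) m.
  by rewrite (valuation_congr_lt xy_dvd x_neq0 lt_xm); lia.
have [lt_ym|ge_ym] := ltnP (v y) m; last by [].
by have := valuation_congr_lt yx_dvd y_neq0 lt_ym; lia.
Qed.

End DiscreteValuation.

Lemma rdvd_hornerB (R : idomainType) (g : {poly R}) (d a w : R) :
  rdvd d (a - w) -> rdvd d (g.[a] - g.[w]).
Proof.
case=> c Eaw.
have : root (g - g.[w]%:P) w by rewrite /root !hornerE subrr.
case/factor_theorem => q Eq; exists (c * q.[a]).
have := congr1 (horner^~ a) Eq.
rewrite /= hornerD hornerN hornerC hornerM hornerXsubC => ->.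
by rewrite Eaw mulrC mulrA.
Qed.

Lemma eq_of_minn_eq_sum x1 x2 y1 y2 m :
  (x1 + x2 <= m.*2)%N -> (x1 + x2 = y1 + y2)%N ->
  minn x1 m = minn y1 m -> minn x2 m = minn y2 m -> x1 = y1.
Proof. by rewrite -addnn; lia. Qed.

Lemma valuation_divisor_congr (R : idomainType) (p : R) (v : R -> nat)
    (f g : {poly R}) n m a w :
  is_dvr_valuation p v -> (n <= m.*2)%N -> rdvd g f ->
  in_Wf v f n a -> in_Wf v f n w -> rdvd (p ^+ m) (a - w) ->
  v g.[a] = v g.[w].
Proof.
move=> dvr le_n2m [h ->] [fa_neq0 vfa] [fw_neq0 vfw] aw_dvd.
move: fa_neq0 fw_neq0 vfa vfw; rewrite !hornerM !mulf_eq0 !negb_or.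
case/andP=> ga_neq0 ha_neq0 /andP [gw_neq0 hw_neq0].
rewrite !(valuationM dvr) // => vfa vfw.
apply: (eq_of_minn_eq_sum (x2 := v h.[a]) (y2 := v h.[w]) (m := m)).
- by rewrite vfa.
- by rewrite vfa vfw.
- exact: (valuation_congr_min dvr (rdvd_hornerB g aw_dvd) ga_neq0 gw_neq0).
- exact: (valuation_congr_min dvr (rdvd_hornerB h aw_dvd) ha_neq0 hw_neq0).
Qed.

Theorem lemma4p4 (R : idomainType) (p : R) (v : R -> nat)
  (f : {poly R}) (P : seq {poly R}) (n : nat) (W : R -> Prop) :
  is_dvr_valuation p v ->
  finite_residue p ->
  (1 < size f)%N ->
  primitive_poly f ->
  irr_divisor_set f P ->
  is_val_fixdiv v f n ->
  (1 <= n)%N ->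
  reps_mod p (uphalf n) (in_Wf v f n) W ->
  (forall a, in_Wf v f n a -> exists w, W w /\ vP v P a = vP v P w) /\
  (forall u : 'I_(size P) -> rat,
     (forall w, W w -> \sum_(i < size P) u i * ((vP v P w i)%:R : rat) = 0) <->
     (forall a, in_Wf v f n a -> \sum_(i < size P) u i * ((vP v P a i)%:R : rat) = 0)).
Proof.
move=> dvr _ _ _ [P_dvd _ _] _ _ [W_sub W_cover _].
have vP_rep a : in_Wf v f n a -> exists w, W w /\ vP v P a = vP v P w.
  move=> Wf_a; have [w [Ww aw_dvd]] := W_cover a Wf_a.
  exists w; split => //; apply: functional_extensionality => i.
  have [_ Pi_dvd] := P_dvd _ (mem_nth 0 (ltn_ord i)).
  have le_n2m : (n <= (uphalf n).*2)%N by rewrite -leq_uphalf_double.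
  exact: valuation_divisor_congr dvr le_n2m Pi_dvd Wf_a (W_sub w Ww) aw_dvd.
split=> // u; split=> [u_ker a /vP_rep [w [Ww ->]]|u_ker w Ww]; first exact: u_ker.
exact: u_ker (W_sub w Ww).
Qed.
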